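(* Under the standing assumptions of the context, let $F(h):=\alpha Lh+\alpha_p\Delta_p(h)+\nabla\psi(h)$ and, for $s\in\mathbb{R}^N$, let $h^\star(s)$ denote a solution of $F(h)=s$. Then for all $s_1,s_2\in\mathbb{R}^N$, \[ \|h^\star(s_1)-h^\star(s_2)\|_2\le\frac1\mu\|s_1-s_2\|_2 . \]
   Context: $G$ is a connected undirected weighted graph on $N$ nodes with symmetric weights $W_{ij}\ge0$, $W_{ii}=0$; $L=D-W$ with $D=\mathrm{diag}(\sum_jW_{ij})$. For $p\in[2,\infty)$, $(\Delta_p(h))_i=\sum_jW_{ij}|h_i-h_j|^{p-2}(h_i-h_j)$. Standing assumptions: $p\in[2,\infty)$; $\alpha>0$, $\alpha_p\ge0$; $\psi:\mathbb{R}^N\to\mathbb{R}$ is $C^1$ and $\mu$-strongly convex with $\mu>0$: $\langle\nabla\psi(x)-\nabla\psi(y),x-y\rangle\ge\mu\|x-y\|_2^2$. *)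

From HB Require Import structures.
From mathcomp Require Import all_boot all_order all_algebra.
From mathcomp Require Import all_classical all_reals all_analysis.
Set Implicit Arguments. Unset Strict Implicit. Unset Printing Implicit Defensive.
Import Order.TTheory GRing.Theory Num.Theory.
Import numFieldNormedType.Exports.
Local Open Scope ring_scope.

Section Defs.
Variables (R : realType) (N : nat).

Definition dotv (u v : 'cV[R]_N) : R := \sum_(i < N) u i ord0 * v i ord0.
Definition norm2 (u : 'cV[R]_N) : R := Num.sqrt (dotv u u).

Definition weight_matrix (W : 'M[R]_N) : Prop :=
  [/\ forall i j, W i j = W j i, forall i j, 0 <= W i j & forall i, W i i = 0].

Definition graph_connected (W : 'M[R]_N) : Prop :=
  forall i j : 'I_N, connect (fun a b => 0 < W a b) i j.

Definition degree_mx (W : 'M[R]_N) : 'M[R]_N :=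
  diag_mx (\row_(i < N) \sum_(j < N) W i j).
Definition laplacian (W : 'M[R]_N) : 'M[R]_N := degree_mx W - W.

Definition p_laplacian (W : 'M[R]_N) (p : R) (h : 'cV[R]_N) : 'cV[R]_N :=
  \col_(i < N) \sum_(j < N)
     W i j * (`|h i ord0 - h j ord0| `^ (p - 2)) * (h i ord0 - h j ord0).

Definition is_C1_gradient (psi : 'cV[R]_N -> R) (g : 'cV[R]_N -> 'cV[R]_N) : Prop :=
  (forall x, differentiable psi x /\ forall v, 'd psi x v = dotv (g x) v)
  /\ continuous g.

Definition strongly_convex_grad (g : 'cV[R]_N -> 'cV[R]_N) (mu : R) : Prop :=
  forall x y, dotv (g x - g y) (x - y) >= mu * dotv (x - y) (x - y).

Definition Fop (W : 'M[R]_N) (p alpha alpha_p : R) (g : 'cV[R]_N -> 'cV[R]_N)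
  (h : 'cV[R]_N) : 'cV[R]_N :=
  alpha *: (laplacian W *m h) + alpha_p *: p_laplacian W p h + g h.

End Defs.

From HB Require Import structures.
From mathcomp Require Import all_boot all_order all_algebra.
From mathcomp Require Import all_classical all_reals all_analysis.
From mathcomp Require Import ring lra.
Import Order.TTheory GRing.Theory Num.Theory.
Import numFieldNormedType.Exports.
Set Implicit Arguments. Unset Strict Implicit. Unset Printing Implicit Defensive.
Local Open Scope ring_scope.

(* F is mu-strongly monotone. Both Laplacian terms have the form
   h |-> (sum_j W_ij phi(h_i - h_j))_i with W symmetric and nonnegative and phi
   odd and nondecreasing; symmetrising the double sum turns <G x - G y, x - y>
   into 1/2 sum_ij W_ij (phi a - phi b)(a - b) >= 0, with a = x_i - x_j and
   b = y_i - y_j. Strong monotonicity, combined with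
   2 mu <v, u> <= |v|^2 + mu^2 |u|^2, gives mu^2 |h1 - h2|^2 <= |F h1 - F h2|^2. *)

Section GraphOperators.
Variables (R : realType) (N : nat).
Implicit Types (u v w x y : 'cV[R]_N) (W : 'M[R]_N) (phi : R -> R).

Lemma dotvDl u v w : dotv (u + v) w = dotv u w + dotv v w.
Proof. by rewrite /dotv -big_split; apply: eq_bigr => i _; rewrite mxE mulrDl. Qed.

Lemma dotvZl (a : R) u w : dotv (a *: u) w = a * dotv u w.
Proof. by rewrite /dotv mulr_sumr; apply: eq_bigr => i _; rewrite mxE mulrA. Qed.

Lemma dotv_ge0 u : 0 <= dotv u u.
Proof. by apply: sumr_ge0 => i _; rewrite -expr2 sqr_ge0. Qed.

Definition graph_op W phi x : 'cV[R]_N :=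
  \col_(i < N) \sum_(j < N) W i j * phi (x i ord0 - x j ord0).

Definition signed_powR (q t : R) : R := `|t| `^ q * t.

Lemma laplacian_graph_op W x : laplacian W *m x = graph_op W id x.
Proof.
apply/matrixP => i k; rewrite ord1 /laplacian mulmxBl /degree_mx mul_diag_mx.
rewrite !mxE mulr_suml -sumrB.
by apply: eq_bigr => j _; rewrite mulrBr.
Qed.

Lemma p_laplacian_graph_op W p x :
  p_laplacian W p x = graph_op W (signed_powR (p - 2)) x.
Proof.
by apply/matrixP => i k; rewrite !mxE; apply: eq_bigr => j _; rewrite mulrA.
Qed.

Lemma sum_antisym_symmetrize (k : 'I_N -> 'I_N -> R) (a : 'I_N -> R) :
  (forall i j, k j i = - k i j) ->
  2 * (\sum_(i < N) \sum_(j < N) k i j * a i)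
  = \sum_(i < N) \sum_(j < N) k i j * (a i - a j).
Proof.
move=> k_anti.
have swap : \sum_(i < N) \sum_(j < N) k i j * a i
          = - \sum_(i < N) \sum_(j < N) k i j * a j.
  rewrite exchange_big /= -sumrN; apply: eq_bigr => i _.
  by rewrite -sumrN; apply: eq_bigr => j _; rewrite k_anti mulNr.
rewrite mulr2n mulrDl mul1r {2}swap -sumrB; apply: eq_bigr => i _.
by rewrite -sumrB; apply: eq_bigr => j _; rewrite mulrBr.
Qed.

Lemma nondecreasing_mulB_ge0 phi (a b : R) :
  {homo phi : s t / s <= t} -> 0 <= (phi a - phi b) * (a - b).
Proof.
move=> phi_mono; case: (lerP b a) => [ba | /ltW ab].
  by apply: mulr_ge0; rewrite subr_ge0 //; apply: phi_mono.
by apply: mulr_le0; rewrite subr_le0 //; apply: phi_mono.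
Qed.

Lemma graph_op_monotone W phi x y :
  (forall i j, W i j = W j i) -> (forall i j, 0 <= W i j) ->
  (forall t, phi (- t) = - phi t) -> {homo phi : s t / s <= t} ->
  0 <= dotv (graph_op W phi x - graph_op W phi y) (x - y).
Proof.
move=> Wsym W_ge0 phi_odd phi_mono.
pose c i j := phi (x i ord0 - x j ord0) - phi (y i ord0 - y j ord0).
have c_anti i j : c j i = - c i j.
  by rewrite /c -(opprB (x i ord0)) -(opprB (y i ord0)) !phi_odd opprB opprK addrC.
have -> : dotv (graph_op W phi x - graph_op W phi y) (x - y)
        = \sum_(i < N) \sum_(j < N) W i j * c i j * (x i ord0 - y i ord0).
  apply: eq_bigr => i _; rewrite !mxE -sumrB mulr_suml.
  by apply: eq_bigr => j _; rewrite -mulrBr.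
rewrite -(pmulr_rge0 _ (ltr0Sn R 1)) sum_antisym_symmetrize; last first.
  by move=> i j; rewrite Wsym c_anti mulrN.
apply: sumr_ge0 => i _; apply: sumr_ge0 => j _.
rewrite -mulrA mulr_ge0 // /c.
have -> : x i ord0 - y i ord0 - (x j ord0 - y j ord0)
        = (x i ord0 - x j ord0) - (y i ord0 - y j ord0) by ring.
exact: nondecreasing_mulB_ge0.
Qed.

Lemma signed_powR_odd (q t : R) : signed_powR q (- t) = - signed_powR q t.
Proof. by rewrite /signed_powR normrN mulrN. Qed.

Lemma signed_powR_nondecreasing (q : R) :
  0 <= q -> {homo signed_powR q : s t / s <= t}.
Proof.
rewrite /signed_powR => q_ge0 s t st.
have [s_ge0 | s_lt0] := lerP 0 s.
  have t_ge0 : 0 <= t by exact: le_trans st.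
  rewrite !ger0_norm //; apply: ler_pM => //; first exact: powR_ge0.
  by apply: (ge0_ler_powR q_ge0); rewrite ?nnegrE.
have [t_ge0 | t_lt0] := lerP 0 t.
  apply: (@le_trans _ _ 0); last by rewrite mulr_ge0 ?powR_ge0.
  by rewrite mulr_ge0_le0 ?powR_ge0 // ltW.
rewrite !ltr0_norm //.
have : (- t) `^ q <= (- s) `^ q.
  by apply: (ge0_ler_powR q_ge0); rewrite ?nnegrE ?oppr_ge0 ?lerN2 // ltW.
have := powR_ge0 (- t) q; nra.
Qed.

Lemma norm2_le_of_coercive (mu : R) u v :
  0 < mu -> mu * dotv u u <= dotv v u -> norm2 u <= mu^-1 * norm2 v.
Proof.
move=> mu_gt0 coercive.
have amgm : 2 * mu * dotv v u <= dotv v v + mu ^+ 2 * dotv u u.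
  rewrite /dotv !mulr_sumr -big_split /=; apply: ler_sum => i _.
  have := sqr_ge0 (v i ord0 - mu * u i ord0); nra.
have uu_ge0 := dotv_ge0 u.
have sq_le : mu ^+ 2 * dotv u u <= dotv v v by nra.
have -> : mu^-1 = Num.sqrt (mu^-1 ^+ 2).
  by rewrite sqrtr_sqr ger0_norm // invr_ge0 ltW.
rewrite /norm2 -sqrtrM ?sqr_ge0 //; apply: ler_wsqrtr.
rewrite -(mulKf (lt0r_neq0 (exprn_gt0 2 mu_gt0)) (dotv u u)) exprVn.
by apply: ler_wpM2l; rewrite ?invr_ge0 ?sqr_ge0.
Qed.

Lemma Fop_strongly_monotone W (p alpha alpha_p mu : R) g x y :
  (forall i j, W i j = W j i) -> (forall i j, 0 <= W i j) ->
  2 <= p -> 0 <= alpha -> 0 <= alpha_p -> strongly_convex_grad g mu ->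
  mu * dotv (x - y) (x - y)
    <= dotv (Fop W p alpha alpha_p g x - Fop W p alpha alpha_p g y) (x - y).
Proof.
move=> Wsym W_ge0 p_ge2 alpha_ge0 alpha_p_ge0 g_strong.
have -> : Fop W p alpha alpha_p g x - Fop W p alpha alpha_p g y
        = alpha *: (graph_op W id x - graph_op W id y)
          + alpha_p *: (graph_op W (signed_powR (p - 2)) x
                        - graph_op W (signed_powR (p - 2)) y)
          + (g x - g y).
  rewrite /Fop !laplacian_graph_op !p_laplacian_graph_op !scalerBr.
  by rewrite !opprD addrACA [X in X + _ = _]addrACA.
have q_ge0 : 0 <= p - 2 by rewrite subr_ge0.
rewrite [leRHS]dotvDl [X in _ <= X + _]dotvDl !dotvZl -[leLHS]add0r.
rewrite lerD ?g_strong // addr_ge0 ?mulr_ge0 ?graph_op_monotone //.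
- exact: signed_powR_odd.
- exact: signed_powR_nondecreasing.
Qed.

End GraphOperators.

Theorem mainTheorem10 (R : realType) (N : nat) (W : 'M[R]_N)
  (p alpha alpha_p mu : R) (psi : 'cV[R]_N -> R) (g : 'cV[R]_N -> 'cV[R]_N) :
  weight_matrix W -> graph_connected W ->
  2 <= p -> 0 < alpha -> 0 <= alpha_p ->
  is_C1_gradient psi g -> 0 < mu -> strongly_convex_grad g mu ->
  forall (s1 s2 h1 h2 : 'cV[R]_N),
    Fop W p alpha alpha_p g h1 = s1 ->
    Fop W p alpha alpha_p g h2 = s2 ->
    norm2 (h1 - h2) <= mu^-1 * norm2 (s1 - s2).
Proof.
move=> [Wsym W_ge0 _] _ p_ge2 alpha_gt0 alpha_p_ge0 _ mu_gt0 g_strong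
  s1 s2 h1 h2 <- <-.
apply: norm2_le_of_coercive => //.
exact: Fop_strongly_monotone Wsym W_ge0 p_ge2 (ltW alpha_gt0) alpha_p_ge0 g_strong.
Qed.
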